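(* For all positive integers $\ell$ and $d$, the forwarding index of the BCube network satisfies $$\pi(\mathcal{B}(\ell,d)) = d^{\ell}-d^{\ell-1}.$$
   Context: The BCube $\mathcal{B}(\ell,d)$ ($\ell,d$ positive integers) is the symmetric digraph defined as follows, with $\mathbb{Z}_d=\{0,1,\dots,d-1\}$. - Hosts: all vectors $\mathbf{h}=h_1\cdots h_\ell\in\mathbb{Z}_d^{\ell}$. - Switches: for each layer $k\in\{1,\dots,\ell\}$, one switch $\mathbf{s}^k$ for each vector $s^k_1\cdots s^k_{\ell-1}\in\mathbb{Z}_d^{\ell-1}$. Switches of different layers are distinct vertices. - Links: host $\mathbf{h}$ and layer-$k$ switch $\mathbf{s}^k$ are joined if and only if $s^k_1\cdots s^k_{\ell-1}=h_1\cdots h_{k-1}h_{k+1}\cdots h_\ell$. Each such link gives two arcs, an uplink (host $\to$ switch) and a downlink (switch $\to$ host), both said to be at layer $k$. There are no other arcs. A host-to-host routing $R$ assigns to every ordered pair $(\mathbf{h}^s,\mathbf{h}^d)$ of distinct hosts one directed path $P_{\mathbf{h}^s,\mathbf{h}^d}$ from $\mathbf{h}^s$ to $\mathbf{h}^d$ in $\mathcal{B}(\ell,d)$. The load of an arc is the number of paths of $R$ containing it, and $\pi(\mathcal{B}(\ell,d),R)$ is the maximum load over all arcs. The forwarding index $\pi(\mathcal{B}(\ell,d))$ is the minimum of $\pi(\mathcal{B}(\ell,d),R)$ over all host-to-host routings $R$. *)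

From mathcomp Require Import all_boot.
Set Implicit Arguments. Unset Strict Implicit. Unset Printing Implicit Defensive.

Section BCube.
Variables l d : nat.

Definition host := {ffun 'I_l -> 'I_d}.
(* Switches: a layer k together with a vector in Z_d^(l-1). *)
Definition switch := ('I_l * {ffun 'I_l.-1 -> 'I_d})%type.
(* Vertices of the BCube digraph: hosts and switches (switches of different
   layers are distinct since the layer is part of the switch). *)
Definition vertex := (host + switch)%type.

Definition del_coord (k : 'I_l) (h : host) : {ffun 'I_l.-1 -> 'I_d} :=
  [ffun j => h (lift k j)].

Definition linked (h : host) (sw : switch) : bool := sw.2 == del_coord sw.1 h.

Definition bcube_arc : rel vertex := fun u v =>
  match u, v with
  | inl h, inr sw => linked h sw
  | inr sw, inl h => linked h sw
  | _, _ => false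
  end.

(* A directed path from a to b, given as the list of vertices after a:
   consecutive vertices are joined by arcs, ends at b, no repeated vertex. *)
Definition is_dpath (a b : vertex) (p : seq vertex) : bool :=
  [&& path bcube_arc a p, last a p == b & uniq (a :: p)].

Definition path_arcs (a : vertex) (p : seq vertex) : seq (vertex * vertex) :=
  zip (a :: p) p.

Definition routing := host -> host -> seq vertex.

Definition valid_routing (R : routing) : Prop :=
  forall hs hd : host, hs != hd -> is_dpath (inl hs) (inl hd) (R hs hd).

Definition load (R : routing) (u v : vertex) : nat :=
  #|[set x : host * host | (x.1 != x.2) &&
      ((u, v) \in path_arcs (inl x.1) (R x.1 x.2))]|.

Definition max_load (R : routing) : nat :=
  \max_(u : vertex) \max_(v : vertex | bcube_arc u v) load R u v.

Definition forwarding_index_is (m : nat) : Prop :=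
  (exists R : routing, valid_routing R /\ max_load R = m) /\
  (forall R : routing, valid_routing R -> m <= max_load R).

End BCube.

(* Lower bound: fix a layer i.  A path between hosts that differ in coordinate i
   must enter a layer-i switch, and it enters from a host h along the uplink
   h -> (i, h without coordinate i).  The d^l (d^l - d^(l-1)) ordered pairs that
   differ at i are thus spread over only d^l uplinks.
   Upper bound: correct the coordinates in increasing order.  The layer-o arcs
   leaving or entering a host h are used only by pairs (hs, hd) with hs o <> hd o
   such that h agrees with hd below o (resp. up to o) and with hs elsewhere; the
   complementary splice determines (hs, hd) and differs from h at o, which leaves
   d^l - d^(l-1) pairs.  Every hop decreases the distance to hd, so routes are
   simple paths. *)

From mathcomp Require Import all_boot.
Set Implicit Arguments. Unset Strict Implicit. Unset Printing Implicit Defensive.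

Lemma card_bigcup_le (I T : finType) (B : I -> {set T}) :
  #|\bigcup_i B i| <= \sum_i #|B i|.
Proof.
elim/big_ind2: _ => [|S1 n1 S2 n2 le1 le2|//]; first by rewrite cards0.
by rewrite (leq_trans (leq_card_setU _ _)) ?leq_add.
Qed.

Lemma measure_path_uniq (T : eqType) (f : T -> nat) (x : T) (p : seq T) :
  path (fun u v => f v < f u) x p -> uniq (x :: p).
Proof.
move=> f_path; apply: (@map_uniq _ _ f).
apply: (@sorted_uniq _ (fun a b => b < a)).
- by move=> a b c ab bc; apply: ltn_trans ab.
- by move=> a; rewrite /= ltnn.
by rewrite /= path_map.
Qed.

Section BCube.
Variables l d : nat.
Implicit Types (g h hs hd : host l d) (u v : vertex l d) (R : routing l d).

Lemma card_host : #|host l d| = d ^ l.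
Proof. by rewrite card_ffun !card_ord. Qed.

Lemma card_coord_eq (k : 'I_l) (c : 'I_d) :
  #|[set g : host l d | g k == c]| = d ^ l.-1.
Proof.
pose F (j : 'I_l) : pred 'I_d := if j == k then pred1 c else predT.
have -> : [set g : host l d | g k == c] = [set g : host l d in family F].
  apply/setP => g; rewrite !inE; apply/idP/familyP => [/eqP gk j|/(_ k)].
    by rewrite /F; case: (eqVneq j k) => [->|]; rewrite ?gk /= ?inE.
  by rewrite /F eqxx inE.
rewrite cardsE card_family foldrE big_map big_enum /= (bigD1_ord k) //= /F eqxx card1.
rewrite (eq_bigr (fun _ => d)) => [|j _]; last first.
  by rewrite eq_sym (negPf (neq_lift k j)) card_ord.
by rewrite mul1n prod_nat_const card_ord.
Qed.

Lemma card_coord_neq (k : 'I_l) (c : 'I_d) :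
  #|[set g : host l d | g k != c]| = d ^ l - d ^ l.-1.
Proof.
rewrite -card_host -(cardsC [set g : host l d | g k == c]) card_coord_eq addKn.
by apply: eq_card => g; rewrite !inE.
Qed.

Lemma card_pairs_coord_neq (k : 'I_l) :
  #|[set x : host l d * host l d | x.1 k != x.2 k]| = d ^ l * (d ^ l - d ^ l.-1).
Proof.
rewrite -sum1_card (eq_bigl (fun x : host l d * host l d => predT x.1 && (x.1 k != x.2 k)))
  => [|x]; last by rewrite inE.
rewrite -(pair_big_dep xpredT (fun g h : host l d => g k != h k) (fun _ _ => 1)) /=.
rewrite (eq_bigr (fun _ => d ^ l - d ^ l.-1)) => [|g _]; last first.
  by rewrite sum1_card -(card_coord_neq k (g k)); apply: eq_card => h; rewrite !inE eq_sym.
by rewrite sum_nat_const card_host.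
Qed.

Lemma path_arcs_cat v (p q : seq (vertex l d)) :
  path_arcs v (p ++ q) = path_arcs v p ++ path_arcs (last v p) q.
Proof. by elim: p v => //= w p IHp v; rewrite /path_arcs /= -IHp. Qed.

Lemma load_le_max_load R u v : bcube_arc u v -> load R u v <= max_load R.
Proof. by move=> uv; apply: leq_trans (leq_bigmax u); apply: leq_bigmax_cond. Qed.

(* The i-th host coordinate is still visible from a switch of another layer;
   only the switches of layer i can change it. *)
Definition layer_coord (i : 'I_l) v : option 'I_d :=
  match v with
  | inl h => Some (h i)
  | inr (k, s) => omap s (unlift k i)
  end.

Lemma layer_coord_arc (i : 'I_l) (c : 'I_d) u v :
  layer_coord i u = Some c -> bcube_arc u v ->
  layer_coord i v = Some c \/ exists h, (u, v) = (inl h, inr (i, del_coord i h)).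
Proof.
case: u v => [h|[k s]] [h'|[k' s']] //=.
  move=> [<-] /eqP /= ->; case: unliftP => [j ->|->]; last by right; exists h.
  by left; rewrite /= /del_coord ffunE.
move=> + /eqP /= s_def; rewrite {}s_def.
by case: unliftP => //= j -> [<-]; left; rewrite /del_coord ffunE.
Qed.

Lemma path_crosses_layer (i : 'I_l) (c : 'I_d) u (p : seq (vertex l d)) :
  layer_coord i u = Some c -> path (@bcube_arc l d) u p ->
  layer_coord i (last u p) != Some c ->
  exists h, (inl h, inr (i, del_coord i h)) \in path_arcs u p.
Proof.
elim: p u => [|v p IHp] u uc /=; first by rewrite uc eqxx.
case/andP=> /(layer_coord_arc uc) [vc | [h uv]] vp lastc; last first.
  by exists h; rewrite /path_arcs /= -uv mem_head.
by have [h hp] := IHp v vc vp lastc; exists h; rewrite /path_arcs /= in_cons hp orbT.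
Qed.

Lemma max_load_lower_bound R : 0 < l -> 0 < d -> valid_routing R ->
  d ^ l - d ^ l.-1 <= max_load R.
Proof.
move=> l_gt0 d_gt0 validR; pose i := Ordinal l_gt0.
pose B h := [set x : host l d * host l d | (x.1 != x.2) &&
   ((inl h, inr (i, del_coord i h)) \in path_arcs (inl x.1) (R x.1 x.2))].
have cover : [set x : host l d * host l d | x.1 i != x.2 i] \subset \bigcup_h B h.
  apply/subsetP => -[hs hd]; rewrite inE /= => neq_i.
  have neq : hs != hd by apply: contraNneq neq_i => ->.
  case/and3P: (validR hs hd neq) => p_path /eqP p_last _.
  have [|h hp] := @path_crosses_layer i (hs i) (inl hs) _ (erefl _) p_path.
    by rewrite p_last /=; apply: contra neq_i => /eqP [->].
  by apply/bigcupP; exists h; rewrite // inE neq hp.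
rewrite -(@leq_pmul2l (d ^ l)) ?expn_gt0 ?d_gt0 // -(card_pairs_coord_neq i).
rewrite (leq_trans (subset_leq_card cover)) // (leq_trans (card_bigcup_le _)) //.
rewrite -card_host -sum_nat_const; apply: leq_sum => h _.
by apply: load_le_max_load; rewrite /= /linked.
Qed.

Definition splice (k : nat) hs hd : host l d :=
  [ffun j : 'I_l => if j < k then hd j else hs j].

Definition hop hs hd (o : 'I_l) : seq (vertex l d) :=
  if hs o == hd o then [::]
  else [:: inr (o, del_coord o (splice o hs hd)); inl (splice o.+1 hs hd)].

Definition digit_routing : routing l d :=
  fun hs hd => flatten [seq hop hs hd o | o <- enum 'I_l].

Definition dist_to hd v : nat :=
  match v with
  | inl g => #|[pred j : 'I_l | g j != hd j]|.*2
  | inr (o, s) => #|[pred j : 'I_l.-1 | s j != hd (lift o j)]|.*2.+1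
  end.

Definition descends hd : rel (vertex l d) :=
  fun u v => bcube_arc u v && (dist_to hd v < dist_to hd u).

Lemma card_coord_neq_split g hd (o : 'I_l) :
  #|[pred j : 'I_l | g j != hd j]| =
    (g o != hd o) + #|[pred j : 'I_l.-1 | del_coord o g j != hd (lift o j)]|.
Proof.
rewrite -!sum1_card !big_mkcond (bigD1_ord o) //= inE; congr (_ + _).
by rewrite [RHS]big_mkcond; apply: eq_bigr => j _; rewrite !inE ffunE.
Qed.

Lemma splice0 hs hd : splice 0 hs hd = hs.
Proof. by apply/ffunP => j; rewrite ffunE. Qed.

Lemma splice_all hs hd : splice l hs hd = hd.
Proof. by apply/ffunP => j; rewrite ffunE ltn_ord. Qed.

Lemma splice_at hs hd (o : 'I_l) : splice o hs hd o = hs o.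
Proof. by rewrite ffunE ltnn. Qed.

Lemma spliceS_at hs hd (o : 'I_l) : splice o.+1 hs hd o = hd o.
Proof. by rewrite ffunE ltnSn. Qed.

Lemma spliceS_off hs hd (o j : 'I_l) : j != o -> splice o.+1 hs hd j = splice o hs hd j.
Proof. by move=> neq_jo; rewrite !ffunE ltnS leq_eqVlt val_eqE (negPf neq_jo). Qed.

Lemma del_coord_spliceS hs hd (o : 'I_l) :
  del_coord o (splice o.+1 hs hd) = del_coord o (splice o hs hd).
Proof. by apply/ffunP => j; rewrite [LHS]ffunE [RHS]ffunE spliceS_off // eq_sym neq_lift. Qed.

Lemma spliceS_eq hs hd (o : 'I_l) : hs o = hd o -> splice o.+1 hs hd = splice o hs hd.
Proof.
move=> eq_o; apply/ffunP => j; case: (eqVneq j o) => [->|]; last exact: spliceS_off.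
by rewrite spliceS_at splice_at.
Qed.

Lemma hop_descends hs hd (o : 'I_l) :
  path (descends hd) (inl (splice o hs hd)) (hop hs hd o) /\
  last (inl (splice o hs hd)) (hop hs hd o) = inl (splice o.+1 hs hd).
Proof.
rewrite /hop; case: eqVneq => [eq_o|neq_o] /=; first by rewrite spliceS_eq.
split=> //; rewrite /descends /= /linked /= del_coord_spliceS eqxx /=.
rewrite !(card_coord_neq_split _ _ o) splice_at spliceS_at eqxx neq_o.
by rewrite del_coord_spliceS add1n add0n doubleS !ltnSn.
Qed.

Lemma route_segment hs hd m (s : seq 'I_l) : map val s = iota m (size s) ->
  path (descends hd) (inl (splice m hs hd)) (flatten [seq hop hs hd o | o : 'I_l <- s]) /\
  last (inl (splice m hs hd)) (flatten [seq hop hs hd o | o : 'I_l <- s]) =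
    inl (splice (m + size s) hs hd).
Proof.
elim: s m => [|o s IHs] m /=; first by rewrite addn0.
case=> <- /IHs [s_path s_last]; have [o_path o_last] := hop_descends hs hd o.
by rewrite cat_path last_cat o_path o_last s_path s_last addSnnS.
Qed.

Lemma route_segment_arcs hs hd m (s : seq 'I_l) : map val s = iota m (size s) ->
  path_arcs (inl (splice m hs hd)) (flatten [seq hop hs hd o | o : 'I_l <- s]) =
    flatten [seq path_arcs (inl (splice o hs hd)) (hop hs hd o) | o : 'I_l <- s].
Proof.
elim: s m => [|o s IHs] m //=.
case=> <- /IHs s_arcs; have [_ o_last] := hop_descends hs hd o.
by rewrite path_arcs_cat o_last s_arcs.
Qed.

Lemma digit_routing_valid : valid_routing digit_routing.
Proof.
move=> hs hd _; have [|p_desc p_last] := @route_segment hs hd 0 (enum 'I_l).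
  by rewrite val_enum_ord size_enum_ord.
rewrite size_enum_ord splice0 splice_all in p_desc p_last.
rewrite /is_dpath p_last eqxx (sub_path _ p_desc) => [|u v /andP[] //].
by rewrite (measure_path_uniq (f := dist_to hd)) // (sub_path _ p_desc) // => u v /andP[].
Qed.

Lemma digit_routing_arc hs hd u v :
  (u, v) \in path_arcs (inl hs) (digit_routing hs hd) ->
  exists2 o : 'I_l, hs o != hd o &
    (u, v) = (inl (splice o hs hd), inr (o, del_coord o (splice o hs hd))) \/
    (u, v) = (inr (o, del_coord o (splice o hs hd)), inl (splice o.+1 hs hd)).
Proof.
rewrite -{1}(splice0 hs hd) route_segment_arcs ?val_enum_ord ?size_enum_ord //.
case/flattenP=> _ /mapP [o _ ->]; rewrite /hop; case: eqVneq => //= neq_o.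
by rewrite /path_arcs /= !inE => /orP [] /eqP ->; exists o => //; [left|right].
Qed.

Lemma card_splice_fiber (k : nat) (o : 'I_l) h :
  #|[set x : host l d * host l d | (splice k x.1 x.2 == h) && (x.1 o != x.2 o)]|
    <= d ^ l - d ^ l.-1.
Proof.
rewrite -(card_in_imset (f := fun x => splice k x.2 x.1)) => [|[a b] [a' b']]; last first.
  rewrite !inE /= => /andP [/eqP eq_h _] /andP [/eqP eq_h' _] eq_swap.
  have eq_splice : splice k a b = splice k a' b' by rewrite eq_h eq_h'.
  by congr pair; apply/ffunP => j; move/ffunP/(_ j): eq_swap;
    move/ffunP/(_ j): eq_splice; rewrite !ffunE; case: ifP.
rewrite -(card_coord_neq o (h o)); apply/subset_leq_card/subsetP => g.
case/imsetP=> -[a b] /[!inE] /andP [/eqP <- neq_o] ->.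
by rewrite /= !ffunE; case: ifP; rewrite // eq_sym.
Qed.

Lemma max_load_upper_bound : max_load digit_routing <= d ^ l - d ^ l.-1.
Proof.
apply/bigmax_leqP => u _; apply/bigmax_leqP => v.
case: u v => [h|[o s]] [h'|[o' s']] //= _.
  apply: leq_trans (card_splice_fiber o' o' h); apply/subset_leq_card/subsetP => -[hs hd].
  by rewrite !inE => /andP [_ /digit_routing_arc [k neq_k [[-> -> _]|//]]]; rewrite eqxx.
apply: leq_trans (card_splice_fiber o.+1 o h'); apply/subset_leq_card/subsetP => -[hs hd].
by rewrite !inE => /andP [_ /digit_routing_arc [k neq_k [//|[-> _ ->]]]]; rewrite eqxx.
Qed.

End BCube.

Theorem theorem1 (l d : nat) (hl : 0 < l) (hd : 0 < d) :
  forwarding_index_is l d (d ^ l - d ^ l.-1).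
Proof.
have lower R := @max_load_lower_bound l d R hl hd.
split=> //; exists (@digit_routing l d); split; first exact: digit_routing_valid.
by apply/eqP; rewrite eqn_leq max_load_upper_bound lower //; apply: digit_routing_valid.
Qed.
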